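(* Let $g$ be a real-valued function on the primes with $0\le g(p)\le\beta$ for all primes $p$, for some constant $\beta$. Assume that for some $c>0$ and each $\varepsilon$ with $0<\varepsilon<1$, \[ \liminf_{x\to\infty}(\varepsilon\log x)^{-1}\sum_{x^{1-\varepsilon}<p\le x}p^{-1}g(p)\log p\ \ge\ c . \] Then for each $\alpha$ with $0<\alpha<c$ there is a subsequence of the primes, whose members are denoted $r$, such that \[ \lim_{x\to\infty}(\log x)^{-1}\sum_{r\le x} r^{-1}g(r)\log r=\alpha . \]
   Context: Sums indexed by $p$ run over primes; the sum over $r\le x$ runs over the members of the chosen subsequence of primes not exceeding $x$. *)

From Stdlib Require Import Reals ZArith Znumtheory Lra ClassicalEpsilon.
Open Scope R_scope.

Definition isprime (n : nat) : Prop := prime (Z.of_nat n).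

(* floor of a real, as a nat (0 for negative reals) *)
Definition nfloor (x : R) : nat := Z.to_nat (Int_part x).

Definition psum (P : nat -> Prop) (f : nat -> R) (x : R) : R :=
  sum_f_R0 (fun n => match excluded_middle_informative (P n) with
                     | left _ => f n | right _ => 0 end) (nfloor x).

Definition term (g : nat -> R) (n : nat) : R := g n * ln (INR n) / INR n.

(** A prime [p] is put into the subsequence exactly when the sum of the terms
    already taken is below [alpha log p].  As each term is at most [beta], the
    running sum never exceeds [alpha log x + beta].  For the lower bound, fix
    [eps] with [alpha eps] small, put [kap = (c - alpha)/2], and consider the
    shortfall of the running sum below [alpha log x].  If it is at least
    [rho log x] with [rho >= alpha eps], the running sum at [x] is below
    [alpha log x^(1-eps)], so every prime of [(x^(1-eps), x]] was taken; by the
    density hypothesis they contribute at least [(alpha + kap) eps log x], so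
    the shortfall at [x^(1-eps)] is at least [(rho + kap eps) log x^(1-eps)].
    After boundedly many such steps the shortfall would exceed [alpha log],
    impossible for a nonnegative running sum; hence the shortfall is eventually
    below [alpha eps log x]. *)

From Stdlib Require Import Reals ZArith Znumtheory Lra Lia ClassicalEpsilon.
Open Scope R_scope.

Lemma ln_0 : ln 0 = 0.
Proof. unfold ln; case Rlt_dec; [intros H; destruct (Rlt_irrefl 0 H) | reflexivity]. Qed.

Lemma ln_le x y : 0 < x -> x <= y -> ln x <= ln y.
Proof.
  intros Hx Hxy; destruct (Rle_lt_or_eq_dec _ _ Hxy) as [Hlt | ->].
  - left; apply ln_increasing; assumption.
  - lra.
Qed.

Lemma ln_le_inv x y : 0 < x -> 0 < y -> ln x <= ln y -> x <= y.
Proof.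
  intros Hx Hy Hln; destruct (Rle_lt_dec x y) as [| Hyx]; [assumption |].
  pose proof (ln_increasing _ _ Hy Hyx); lra.
Qed.

Lemma ln_lt_self x : 0 < x -> ln x < x.
Proof.
  intros Hx; destruct (Req_dec (ln x) 0) as [E | E]; [lra |].
  pose proof (exp_ineq1 _ E) as H; rewrite exp_ln in H by assumption; lra.
Qed.

Lemma ln_INR_nonneg n : 0 <= ln (INR n).
Proof.
  destruct n as [| n]; [simpl; rewrite ln_0; lra |].
  rewrite <- ln_1; apply ln_le; [lra |].
  rewrite S_INR; pose proof (pos_INR n); lra.
Qed.

Lemma ln_INR_le_succ n : ln (INR n) <= ln (INR (S n)).
Proof.
  destruct n as [| n].
  - simpl INR at 1; rewrite ln_0; apply ln_INR_nonneg.
  - apply ln_le; [apply lt_0_INR; lia | apply le_INR; lia].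
Qed.

Lemma Int_part_nonneg x : 0 <= x -> (0 <= Int_part x)%Z.
Proof.
  intros Hx; destruct (base_Int_part x) as [_ H].
  assert (IZR (-1) < IZR (Int_part x)) as Hlt by (simpl; lra).
  apply lt_IZR in Hlt; lia.
Qed.

Lemma INR_nfloor x : 0 <= x -> INR (nfloor x) = IZR (Int_part x).
Proof.
  intros Hx; unfold nfloor.
  rewrite INR_IZR_INZ, Z2Nat.id by (apply Int_part_nonneg; assumption); reflexivity.
Qed.

Lemma nfloor_le x : 0 <= x -> INR (nfloor x) <= x.
Proof. intros Hx; rewrite INR_nfloor by assumption; apply base_Int_part. Qed.

Lemma nfloor_gt x : 0 <= x -> x < INR (nfloor x) + 1.
Proof. intros Hx; rewrite INR_nfloor by assumption; destruct (base_Int_part x); lra. Qed.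

Lemma nfloor_ge n x : 0 <= x -> INR n <= x -> (n <= nfloor x)%nat.
Proof.
  intros Hx Hn; pose proof (nfloor_gt x Hx).
  assert (INR n < INR (S (nfloor x))) as Hlt by (rewrite S_INR; lra).
  apply INR_lt in Hlt; lia.
Qed.

Lemma nfloor_le_nfloor x y : 0 <= x -> x <= y -> (nfloor x <= nfloor y)%nat.
Proof. intros Hx Hxy; apply nfloor_ge; [lra |]; pose proof (nfloor_le x Hx); lra. Qed.

Lemma Rabs_ratio_sub_lt a l s eta :
  0 < l -> a * l - s < eta * l -> s - a * l < eta * l -> Rabs (/ l * s - a) < eta.
Proof.
  intros Hl Hlo Hhi.
  replace (/ l * s - a) with ((s - a * l) / l) by (field; lra).
  unfold Rdiv; rewrite Rabs_mult, Rabs_inv, (Rabs_pos_eq l) by lra.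
  apply (Rmult_lt_reg_r l); [assumption |].
  rewrite Rmult_assoc, Rinv_l, Rmult_1_r by lra; apply Rabs_def1; lra.
Qed.

Lemma le_mul_ln_of_le_inv_mul (s : R -> R) (b e X : R) :
  0 < e -> (forall x, X <= x -> b <= / (e * ln x) * s x) ->
  forall t, 0 < t -> ln (Rmax X 2) <= ln t -> b * (e * ln t) <= s t.
Proof.
  intros He Hs t Ht Hlnt.
  pose proof (Rmax_l X 2); pose proof (Rmax_r X 2).
  assert (Ht2 : Rmax X 2 <= t) by (apply ln_le_inv; lra).
  assert (Hln : 0 < ln t) by (rewrite <- ln_1; apply ln_increasing; lra).
  assert (Hel : 0 < e * ln t) by (apply Rmult_lt_0_compat; assumption).
  specialize (Hs t ltac:(lra)).
  apply (Rmult_le_compat_r (e * ln t) _ _ (Rlt_le _ _ Hel)) in Hs.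
  replace (/ (e * ln t) * s t * (e * ln t)) with (s t) in Hs by (field; lra).
  assumption.
Qed.

Lemma exists_small_factor a e : 0 < a -> 0 < e -> exists eps, 0 < eps < 1 /\ a * eps < e.
Proof.
  intros Ha He; exists (Rmin (e / a) 1 / 2).
  assert (Hea : 0 < e / a) by (apply Rdiv_lt_0_compat; assumption).
  pose proof (Rmin_l (e / a) 1); pose proof (Rmin_r (e / a) 1).
  pose proof (Rmin_glb_lt (e / a) 1 0 Hea Rlt_0_1).
  assert (a * (e / a) = e) by (field; lra).
  split; [lra | nra].
Qed.

Lemma ln_eventually_gt M : exists X, forall x, X <= x -> 1 <= x /\ M < ln x.
Proof.
  exists (exp (Rabs M + 1)); intros x Hx.
  pose proof (exp_ineq1_le (Rabs M + 1)); pose proof (Rabs_pos M); pose proof (Rle_abs M).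
  split; [lra |].
  apply ln_le in Hx; [| apply exp_pos]; rewrite ln_exp in Hx; lra.
Qed.

Lemma isprime_ge2 p : isprime p -> (2 <= p)%nat.
Proof. unfold isprime; intros Hp; apply prime_ge_2 in Hp; lia. Qed.

Lemma term_bounds g beta p :
  (1 <= p)%nat -> 0 <= g p <= beta -> 0 <= term g p <= beta.
Proof.
  intros Hp [Hg0 Hgb]; unfold term.
  assert (Hp1 : 1 <= INR p) by (apply (le_INR 1); assumption).
  assert (Hlog : 0 <= ln (INR p) / INR p <= 1).
  { pose proof (ln_INR_nonneg p); pose proof (ln_lt_self (INR p) ltac:(lra)).
    split; [apply Rle_mult_inv_pos; lra |].
    apply (Rmult_le_reg_r (INR p)); [lra |].
    unfold Rdiv; rewrite Rmult_assoc, Rinv_l by lra; lra. }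
  replace (g p * ln (INR p) / INR p) with (g p * (ln (INR p) / INR p)) by (unfold Rdiv; ring).
  nra.
Qed.

Definition psum_nat (Q : nat -> Prop) (a : nat -> R) (N : nat) : R :=
  sum_f_R0 (fun n => if excluded_middle_informative (Q n) then a n else 0) N.

Lemma psum_psum_nat Q a x : psum Q a x = psum_nat Q a (nfloor x).
Proof. reflexivity. Qed.

Section Greedy.

Variables (P : nat -> Prop) (a f : nat -> R).

Fixpoint greedy_sum (n : nat) : R :=
  match n with
  | O => 0
  | S m => greedy_sum m +
      (if excluded_middle_informative (P (S m) /\ greedy_sum m < f (S m))
       then a (S m) else 0)
  end.

Definition greedy_sel (n : nat) : Prop :=
  match n with
  | O => False
  | S m => P (S m) /\ greedy_sum m < f (S m)
  end.

Lemma psum_nat_greedy_sel N : psum_nat greedy_sel a N = greedy_sum N.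
Proof.
  unfold psum_nat; induction N as [| N IH]; simpl.
  - destruct (excluded_middle_informative False); [contradiction | reflexivity].
  - rewrite IH; reflexivity.
Qed.

Lemma greedy_sel_admissible n : greedy_sel n -> P n.
Proof. destruct n as [| n]; simpl; tauto. Qed.

Hypothesis a_nonneg : forall n, P n -> 0 <= a n.

Lemma greedy_sum_le_succ n : greedy_sum n <= greedy_sum (S n).
Proof.
  simpl; destruct excluded_middle_informative as [[Hn _] |]; [| lra].
  pose proof (a_nonneg _ Hn); lra.
Qed.

Lemma greedy_sum_monotone m n : (m <= n)%nat -> greedy_sum m <= greedy_sum n.
Proof.
  induction 1 as [| n _ IH]; [lra |].
  pose proof (greedy_sum_le_succ n); lra.
Qed.

Lemma greedy_sum_nonneg n : 0 <= greedy_sum n.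
Proof. apply (greedy_sum_monotone 0); lia. Qed.

Lemma greedy_sel_below n N :
  (1 <= n <= N)%nat -> P n -> greedy_sum N < f n -> greedy_sel n.
Proof.
  intros Hn HP Hlt; destruct n as [| m]; [lia |]; split; [assumption |].
  pose proof (greedy_sum_monotone m N ltac:(lia)); lra.
Qed.

Lemma greedy_sum_le_target beta :
  0 <= beta -> 0 <= f 0 -> (forall n, f n <= f (S n)) ->
  (forall n, P n -> a n <= beta) -> forall n, greedy_sum n <= f n + beta.
Proof.
  intros Hbeta Hf0 Hf Ha; induction n as [| n IH]; simpl; [lra |].
  destruct excluded_middle_informative as [[Hn Hlt] | _].
  - pose proof (Ha _ Hn); lra.
  - pose proof (Hf n); lra.
Qed.

Lemma greedy_sum_ge_psum_nat (Q : nat -> Prop) M N :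
  (M <= N)%nat -> (forall n, (n <= N)%nat -> Q n -> (M < n)%nat /\ greedy_sel n) ->
  greedy_sum M + psum_nat Q a N <= greedy_sum N.
Proof.
  unfold psum_nat; induction N as [| N IH]; intros HMN HQ.
  - assert (M = 0%nat) by lia; subst M; simpl.
    destruct excluded_middle_informative as [HQ0 |]; [| lra].
    destruct (HQ 0%nat (le_n 0) HQ0); lia.
  - destruct (Nat.eq_dec M (S N)) as [-> | HM].
    { rewrite sum_eq_R0; [lra |]; intros n Hn.
      destruct excluded_middle_informative as [HQn |]; [| reflexivity].
      destruct (HQ n Hn HQn); lia. }
    pose proof (IH ltac:(lia) ltac:(intros n Hn; apply HQ; lia)).
    simpl sum_f_R0; simpl greedy_sum.
    destruct (excluded_middle_informative (Q (S N))) as [HQN | _].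
    + destruct (HQ _ (le_n _) HQN) as [_ Hsel].
      destruct excluded_middle_informative; [lra | contradiction].
    + destruct excluded_middle_informative as [[HP _] |]; [| lra].
      pose proof (a_nonneg _ HP); lra.
Qed.

End Greedy.

Section GreedyPrimes.

Variables (g : nat -> R) (alpha : R).
Hypothesis g_nonneg : forall p, isprime p -> 0 <= g p.
Hypothesis alpha_pos : 0 < alpha.

Definition greedy_target (n : nat) : R := alpha * ln (INR n).

Definition prime_selection : nat -> Prop :=
  greedy_sel isprime (term g) greedy_target.

Definition selected_sum (t : R) : R :=
  greedy_sum isprime (term g) greedy_target (nfloor t).

Definition deficit (t : R) : R := alpha * ln t - selected_sum t.

Lemma term_nonneg p : isprime p -> 0 <= term g p.
Proof.
  intros Hp; pose proof (isprime_ge2 p Hp).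
  apply (term_bounds g (g p)); [lia | split; [apply g_nonneg, Hp | lra]].
Qed.

Lemma prime_selection_prime r : prime_selection r -> isprime r.
Proof. apply greedy_sel_admissible. Qed.

Lemma psum_prime_selection x : psum prime_selection (term g) x = selected_sum x.
Proof. rewrite psum_psum_nat; apply psum_nat_greedy_sel. Qed.

Lemma deficit_le t : deficit t <= alpha * ln t.
Proof.
  unfold deficit, selected_sum.
  pose proof (greedy_sum_nonneg _ _ greedy_target term_nonneg (nfloor t)); lra.
Qed.

Lemma deficit_ge beta t :
  (forall p, isprime p -> g p <= beta) -> 0 <= beta -> 1 <= t -> - beta <= deficit t.
Proof.
  intros Hbeta Hb Ht; unfold deficit, selected_sum.
  assert (Hsum : greedy_sum isprime (term g) greedy_target (nfloor t)
                 <= alpha * ln (INR (nfloor t)) + beta).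
  { apply greedy_sum_le_target; [assumption | | |].
    - unfold greedy_target; pose proof (ln_INR_nonneg 0); nra.
    - intros n; unfold greedy_target; pose proof (ln_INR_le_succ n); nra.
    - intros p Hp; pose proof (isprime_ge2 p Hp).
      apply (term_bounds g beta); [lia | split; auto]. }
  assert (ln (INR (nfloor t)) <= ln t).
  { apply ln_le; [| apply nfloor_le; lra].
    apply lt_0_INR; apply nfloor_ge; simpl; lra. }
  nra.
Qed.

Variables (eps kap L : R).
Hypothesis eps_range : 0 < eps < 1.
Hypothesis kap_pos : 0 < kap.
Hypothesis L_pos : 0 < L.
Hypothesis prime_density : forall t, 0 < t -> L <= ln t ->
  (alpha + kap) * (eps * ln t)
  <= psum (fun p => isprime p /\ Rpower t (1 - eps) < INR p) (term g) t.

Lemma deficit_step t rho :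
  0 < t -> L <= ln t -> alpha * eps <= rho -> rho * ln t <= deficit t ->
  (rho + kap * eps) * ln (Rpower t (1 - eps)) <= deficit (Rpower t (1 - eps)).
Proof.
  intros Ht HLt Hrho Hdef.
  set (y := Rpower t (1 - eps)).
  assert (Hy : 0 < y) by apply exp_pos.
  assert (Hlny : ln y = (1 - eps) * ln t) by apply ln_Rpower.
  assert (Hyt : y <= t) by (apply ln_le_inv; nra).
  assert (Hbelow : selected_sum t <= alpha * ln y).
  { unfold deficit in Hdef; rewrite Hlny; nra. }
  assert (Hgain : selected_sum y
                  + psum (fun p => isprime p /\ y < INR p) (term g) t <= selected_sum t).
  { apply greedy_sum_ge_psum_nat; [exact term_nonneg | apply nfloor_le_nfloor; lra |].
    intros n Hn [Hp Hyn]; pose proof (isprime_ge2 n Hp); split.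
    - destruct (le_lt_dec n (nfloor y)) as [Hle |]; [| assumption].
      apply le_INR in Hle; pose proof (nfloor_le y ltac:(lra)); lra.
    - apply (greedy_sel_below _ _ _ term_nonneg n (nfloor t)); [lia | assumption |].
      apply (Rle_lt_trans _ _ _ Hbelow), Rmult_lt_compat_l; [assumption |].
      apply ln_increasing; assumption. }
  pose proof (prime_density t Ht HLt) as Hdensity; fold y in Hdensity.
  assert (Hshrink : (rho + kap * eps) * ln y <= (rho + kap * eps) * ln t).
  { apply Rmult_le_compat_l; nra. }
  unfold deficit in *; rewrite Hlny in *; nra.
Qed.

Lemma deficit_iterate k : forall t rho,
  0 < t -> L <= (1 - eps) ^ k * ln t -> alpha * eps <= rho -> rho * ln t <= deficit t ->
  exists y, L <= ln y /\ (rho + INR k * (kap * eps)) * ln y <= deficit y.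
Proof.
  induction k as [| k IH]; intros t rho Ht HL Hrho Hdef.
  - exists t; simpl in *; split; lra.
  - assert (Hpow : 0 < (1 - eps) ^ S k <= 1).
    { split; [apply pow_lt; lra |].
      rewrite <- (pow1 (S k)) at 2; apply pow_incr; lra. }
    assert (HLt : L <= ln t).
    { assert (0 < ln t) by (destruct (Rle_lt_dec (ln t) 0); [nra | assumption]).
      nra. }
    simpl in HL.
    destruct (IH (Rpower t (1 - eps)) (rho + kap * eps)) as [y [HLy Hdefy]].
    + apply exp_pos.
    + rewrite ln_Rpower; nra.
    + nra.
    + apply deficit_step; assumption.
    + exists y; split; [assumption |]; rewrite S_INR; nra.
Qed.

Lemma deficit_lt_eventually : exists X, forall x, X <= x -> deficit x < alpha * eps * ln x.
Proof.
  assert (Hke : 0 < kap * eps) by nra.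
  set (K := S (nfloor (alpha / (kap * eps)))).
  assert (HK : alpha < INR K * (kap * eps)).
  { assert (Hq : 0 <= alpha / (kap * eps)) by (apply Rle_mult_inv_pos; lra).
    pose proof (nfloor_gt _ Hq); unfold K; rewrite S_INR.
    apply (Rmult_lt_reg_r (/ (kap * eps))); [apply Rinv_0_lt_compat; lra |].
    rewrite Rmult_assoc, Rinv_r by lra; unfold Rdiv in *; lra. }
  assert (HpK : 0 < (1 - eps) ^ K) by (apply pow_lt; lra).
  exists (exp (L / (1 - eps) ^ K)); intros x Hx.
  assert (Hxp : 0 < x) by (pose proof (exp_pos (L / (1 - eps) ^ K)); lra).
  assert (Hlnx : L <= (1 - eps) ^ K * ln x).
  { apply ln_le in Hx; [| apply exp_pos]; rewrite ln_exp in Hx.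
    replace L with ((1 - eps) ^ K * (L / (1 - eps) ^ K)) by (field; lra).
    apply Rmult_le_compat_l; lra. }
  apply Rnot_le_lt; intros Hdef.
  destruct (deficit_iterate K x (alpha * eps) Hxp Hlnx (Rle_refl _) Hdef) as [y [HLy Hdefy]].
  pose proof (deficit_le y).
  assert (0 < (alpha * eps + INR K * (kap * eps) - alpha) * ln y) by (apply Rmult_lt_0_compat; nra).
  lra.
Qed.

End GreedyPrimes.

Theorem lemma5 (g : nat -> R) (beta c : R)
  (hg : forall p, isprime p -> 0 <= g p <= beta)
  (hc : 0 < c)
  (hliminf : forall eps, 0 < eps < 1 ->
     forall eta, 0 < eta -> exists X, forall x, X <= x ->
       c - eta <= / (eps * ln x) *
         psum (fun p => isprime p /\ Rpower x (1 - eps) < INR p) (term g) x) :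
  forall alpha, 0 < alpha < c ->
    exists S : nat -> Prop, (forall r, S r -> isprime r) /\
      forall eta, 0 < eta -> exists X, forall x, X <= x ->
        Rabs (/ ln x * psum S (term g) x - alpha) < eta.
Proof.
  intros alpha [Halpha Halpha_c].
  assert (Hg0 : forall p, isprime p -> 0 <= g p) by (intros p Hp; apply hg, Hp).
  assert (Hbeta : 0 <= beta) by (destruct (hg 2%nat prime_2); lra).
  exists (prime_selection g alpha); split; [apply prime_selection_prime |].
  intros eta Heta.
  destruct (exists_small_factor alpha eta Halpha Heta) as [eps [Heps Heps_eta]].
  set (kap := (c - alpha) / 2).
  assert (Hkap : 0 < kap) by (unfold kap; lra).
  destruct (hliminf eps Heps kap Hkap) as [X HX].
  destruct (deficit_lt_eventually g alpha Hg0 Halpha eps kap (ln (Rmax X 2)) Heps Hkap)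
    as [X1 HX1].
  - rewrite <- ln_1; apply ln_increasing; [lra | pose proof (Rmax_r X 2); lra].
  - replace (alpha + kap) with (c - kap) by (unfold kap; lra).
    apply (le_mul_ln_of_le_inv_mul _ _ _ X (proj1 Heps) HX).
  - destruct (ln_eventually_gt (beta / eta)) as [X2 HX2].
    exists (Rmax X1 X2); intros x Hx.
    destruct (HX2 x ltac:(pose proof (Rmax_r X1 X2); lra)) as [Hx1 Hlnx].
    assert (Hbeta_eta : beta < eta * ln x).
    { replace beta with (eta * (beta / eta)) by (field; lra).
      apply Rmult_lt_compat_l; assumption. }
    pose proof (HX1 x ltac:(pose proof (Rmax_l X1 X2); lra)).
    pose proof (deficit_ge g alpha Hg0 Halpha beta x (fun p Hp => proj2 (hg p Hp)) Hbeta Hx1).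
    rewrite psum_prime_selection; unfold deficit in *.
    apply Rabs_ratio_sub_lt; nra.
Qed.
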